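(* Let $\lambda\in\mathbb{C}^n$. The superspace $M(\lambda)$ is a $\mathfrak{gl}(m,n)$-module, where $\mathfrak{gl}(m,n)_0=\mathfrak{gl}_m\oplus\mathfrak{gl}_n$ acts by the tensor product action and the odd part acts by $$E_{i,m+j}\cdot e_{i_1}\wedge\dots\wedge e_{i_r}y(\lambda')=(-1)^r\lambda'_j\,e_i\wedge e_{i_1}\wedge\dots\wedge e_{i_r}y(\lambda'-e_j),$$ $$E_{m+j,i}\cdot e_{i_1}\wedge\dots\wedge e_{i_r}y(\lambda')=\begin{cases}0,& i\notin\{i_1,\dots,i_r\},\\ (-1)^{r-s}e_{i_1}\wedge\dots\wedge\widehat{e_{i_s}}\wedge\dots\wedge e_{i_r}y(\lambda'+e_j),& i=i_s,\end{cases}$$ for all $i\in\{1,\dots,m\}$, $j\in\{1,\dots,n\}$ and nonzero $e_{i_1}\wedge\dots\wedge e_{i_r}y(\lambda')\in M(\lambda)$.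
   Context: $\mathfrak{gl}(m,n)$ has basis of matrix units $E_{a,b}$, $1\le a,b\le m+n$; even part $\mathfrak{gl}(m,n)_0$ spanned by $E_{a,b}$ with $a,b\le m$ or $a,b>m$, odd part by $E_{i,m+j},E_{m+j,i}$ ($i\le m$, $j\le n$); $\mathfrak{gl}(m,n)_0=\mathfrak{gl}_m\oplus\mathfrak{gl}_n$, with $\mathfrak{gl}_m=\mathrm{span}\{E_{i,k}:i,k\le m\}$ and $\mathfrak{gl}_n$ identified with $\mathrm{span}\{E_{m+l,m+j}\}$ via $E_{l,j}\mapsto E_{m+l,m+j}$. Modules are $\mathbb{Z}_2$-graded. $\Lambda(\mathbb{C}^m)=\bigoplus_{r=0}^m\Lambda^r(\mathbb{C}^m)$ with $e_1,\dots,e_m$ the standard basis of $\mathbb{C}^m$ and $\mathfrak{gl}_m$ acting naturally ($E_{i,k}e_s=\delta_{k,s}e_i$, extended as a derivation of $\wedge$; trivially on $\Lambda^0=\mathbb{C}$). For $\lambda\in\mathbb{C}^n$: $e_1,\dots,e_n$ also denotes the standard basis of $\mathbb{Z}^n$, $|\mu|=\sum_j\mu_j$; $S(\lambda)=X_1\times\dots\times X_n$ with $X_j=\lambda_j+\mathbb{Z}$ if $\lambda_j\notin\mathbb{Z}$, $X_j=\mathbb{Z}_{\ge0}$ if $\lambda_j\in\mathbb{Z}_{\ge0}$, $X_j=\{-1,-2,\dots\}$ if $\lambda_j\in\{-1,-2,\dots\}$; $W(\lambda)$ has basis $\{y(\lambda'):\lambda'\in S(\lambda)\}$, with $y(\mu)=0$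 for $\mu\notin S(\lambda)$, and $\mathfrak{gl}_n$ acts by $E_{l,j}y(\lambda')=\lambda'_jy(\lambda'-e_j+e_l)$. $M(\lambda)=\Lambda(\mathbb{C}^m)\otimes W(\lambda)$ (as a $\mathfrak{gl}_m\oplus\mathfrak{gl}_n$-module), spanned by elements $e_{i_1}\wedge\dots\wedge e_{i_r}y(\lambda')$ ($\otimes$ omitted; $r=0$ gives $y(\lambda')$), with $\mathbb{Z}_2$-grading: $M(\lambda)_{\bar i}$ is spanned by those $e_{i_1}\wedge\dots\wedge e_{i_r}y(\lambda')$ with $|\lambda-\lambda'|\equiv i\pmod 2$. *)

(* Complex numbers are modelled as R[i] = complex R for an
   arbitrary R : realType (mathcomp-real-closed); all constructions below are
   stated over an arbitrary field C and then instantiated at C := R[i]. *)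
From HB Require Import structures.
From mathcomp Require Import all_boot all_algebra.
From mathcomp Require Export complex.
From mathcomp Require Import boolp reals.
Set Implicit Arguments. Unset Strict Implicit. Unset Printing Implicit Defensive.
Import GRing.Theory.
Local Open Scope ring_scope.

Section SuperModule.
Variables (C : fieldType) (m n : nat).

Definition isZ (x : C) : Prop := exists k : int, x = k%:~R.
Definition isN (x : C) : Prop := exists k : nat, x = k%:R.
Definition isNeg (x : C) : Prop := exists k : nat, x = - (k.+1)%:R.

Definition inX (lj x : C) : Prop :=
  [\/ ~ isZ lj /\ isZ (x - lj), isN lj /\ isN x | isNeg lj /\ isNeg x].

Definition inS (lam lam' : 'I_n -> C) : Prop := forall j, inX (lam j) (lam' j).

(* ---------- basis of M(lambda) ----------
   The vector e_{i_1} /\ ... /\ e_{i_r} y(lambda') with i_1 < ... < i_r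
   is encoded by the pair ([set i_1; ...; i_r], lambda'); such pairs with
   inS lam lambda' form a basis of M(lambda) = Lambda(C^m) (x) W(lambda). *)
Definition basis := ({set 'I_m} * {ffun 'I_n -> C})%type.

Definition comb := seq (C * basis).

Definition coef (v : comb) (b : basis) : C := \sum_(t <- v | t.2 == b) t.1.

Definition ninv (s : seq 'I_m) : nat :=
  \sum_(p < size s) \sum_(q < size s)
     ((p < q)%N && (nth 0%N (map val s) q < nth 0%N (map val s) p)%N).

(* e_{s_1} /\ ... /\ e_{s_r} = sign * e_I with I = {s_1,...,s_r} sorted
   (and = 0 if the s_k are not distinct) *)
Definition wedge (s : seq 'I_m) : C * {set 'I_m} :=
  if uniq s then ((-1) ^+ ninv s, [set x in s]) else (0, set0).

Definition mkterm (c : C) (s : seq 'I_m) (l : {ffun 'I_n -> C}) : C * basis :=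
  (c * (wedge s).1, ((wedge s).2, l)).

Definition addE (l : {ffun 'I_n -> C}) (j : 'I_n) : {ffun 'I_n -> C} :=
  [ffun k => l k + (k == j)%:R].
Definition subE (l : {ffun 'I_n -> C}) (j : 'I_n) : {ffun 'I_n -> C} :=
  [ffun k => l k - (k == j)%:R].
Definition moveE (l : {ffun 'I_n -> C}) (j k0 : 'I_n) : {ffun 'I_n -> C} :=
  [ffun k => l k - (k == j)%:R + (k == k0)%:R].

(* ---------- action of the matrix unit E_{a,c} of gl(m,n) on a basis vector
   (indices 0-based: a < m is i in {1..m}; a = m + j is m+j) ---------- *)
Definition act (a c : 'I_(m + n)) (b : basis) : comb :=
  let I := b.1 in let l := b.2 in let s := enum I in let r := #|I| in
  match split a, split c with
  | inl i, inl k =>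
      (* gl_m: derivation action on Lambda(C^m), E_{i,k} e_{s_p} = delta_{k,s_p} e_i *)
      [seq mkterm 1 (set_nth i s p i) l | p <- iota 0 r & nth i s p == k]
  | inr k0, inr j =>
      [:: (l j, (I, moveE l j k0))]
  | inl i, inr j =>
      [:: mkterm ((-1) ^+ r * l j) (i :: s) (subE l j)]
  | inr j, inl i =>
      (* E_{m+j,i}; i = s_(index i s), i.e. paper's position index i s + 1 *)
      if i \in I then [:: ((-1) ^+ (r - (index i s).+1), (I :\ i, addE l j))]
      else [::]
  end.

(* linear extension to formal combinations; terms whose basis vector is not in
   M(lambda) (i.e. y(mu) with mu notin S(lambda)) are zero and dropped *)
Definition actL (lam : 'I_n -> C) (a c : 'I_(m + n)) (v : comb) : comb :=
  flatten [seq [seq (t.1 * u.1, u.2) | u <- act a c t.2]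
          | t : C * basis <- v & `[< inS lam (fun j => t.2.2 j) >]].

(* parity of the index a (true = odd, i.e. a > m in 1-based numbering) *)
Definition ipar (a : 'I_(m + n)) : bool := (m <= a)%N.
Definition Epar (a c : 'I_(m + n)) : bool := ipar a (+) ipar c.

Definition bpar (lam : 'I_n -> C) (b : basis) (p : bool) : Prop :=
  exists k : int, \sum_(j < n) (lam j - b.2 j) = k%:~R /\ odd (absz k) = p.

End SuperModule.

From mathcomp Require Import all_boot all_algebra.
From mathcomp Require Import complex reals boolp functions.
From mathcomp Require Import ring.
Set Implicit Arguments.
Unset Strict Implicit.
Unset Printing Implicit Defensive.
Import GRing.Theory.
Local Open Scope ring_scope.

(* M(lambda) is the oscillator realisation of gl(m|n).  On Lambda(C^m), wedging with e_i and
   contracting e_i satisfy the canonical anticommutation relations and anticommute with the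
   parity P = (-1)^r; on W(lambda), d_j : y(l) |-> l_j y(l - e_j) and x_j : y(l) |-> y(l + e_j)
   satisfy the canonical commutation relations, also at the boundary of S(lambda), because
   l_j = 0 there, resp. y(l + e_j) = 0 when l_j = -1.  The formulas of the action say
   E_(i,k) = e_i /\ i_k, E_(m+l,m+j) = x_l d_j, E_(i,m+j) = e_i P d_j and
   E_(m+j,i) = x_j P i_i, and the super-commutation relations of gl(m|n) follow from those of
   the generators.  Each E_(a,b) changes |lambda - lambda'| by 0 or by +-1 according to its
   parity, which gives compatibility with the grading. *)

Lemma filter_nth_iota (T : eqType) (x0 k : T) (s : seq T) : uniq s ->
  [seq p <- iota 0 (size s) | nth x0 s p == k] = if k \in s then [:: index k s] else [::].
Proof.
elim: s => [|y s IH] //= /andP[y_notin_s s_uniq].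
rewrite (iotaDl 1 0) filter_map (@eq_filter _ _ (fun p => nth x0 s p == k)) // IH //.
by rewrite inE; have [<- | _] := eqVneq y k; [rewrite (negbTE y_notin_s) | case: (k \in s)].
Qed.

Lemma enum_setD1 (T : finType) (A : {set T}) x :
  enum (A :\ x) = filter (predC1 x) (enum A).
Proof.
by rewrite /enum_mem -filter_predI; apply: eq_filter => y; rewrite !inE.
Qed.

Lemma sumr_delta (R : pzSemiRingType) (n : nat) (j : 'I_n) : \sum_(i < n) ((i == j)%:R : R) = 1.
Proof. by rewrite (bigD1 j) //= eqxx big1 ?addr0 // => i /negbTE ->. Qed.

Lemma odd_absz_addr1 (k : int) : odd `|k + 1| = ~~ odd `|k|.
Proof.
case: k => k; first by rewrite -PoszD addn1.
by rewrite NegzE abszN /= -[k.+1]addn1 PoszD opprD subrK abszN negbK.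
Qed.

Lemma odd_absz_subr1 (k : int) : odd `|k - 1| = ~~ odd `|k|.
Proof. by rewrite -[in RHS](subrK 1 k) odd_absz_addr1 negbK. Qed.

Section Inversions.
Local Open Scope nat_scope.

Definition ninv_nat (t : seq nat) : nat :=
  \sum_(p < size t) \sum_(q < size t) ((p < q) && (nth 0 t q < nth 0 t p)).

Lemma ninv_nat_cons x t :
  ninv_nat (x :: t) = count (fun y => y < x) t + ninv_nat t.
Proof.
have count_nth (P : pred nat) s : count P s = \sum_(q < size s) P (nth 0 s q).
  by elim: s => [|y s IH] /=; rewrite ?big_ord0 // big_ord_recl IH.
rewrite /ninv_nat /= big_ord_recl big_ord_recl /= add0n count_nth; congr (_ + _).
apply: eq_bigr => p _; rewrite big_ord_recl /= add0n; apply: eq_bigr => q _.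
by rewrite /bump /= !add1n ltnS.
Qed.

Lemma count_lt_head_sorted x t : sorted ltn (x :: t) -> count (fun y => y < x) t = 0.
Proof.
move=> /(order_path_min ltn_trans) /allP t_gt_x; apply/eqP; rewrite -leqn0 leqNgt.
by rewrite -has_count; apply/hasPn => y /t_gt_x /= x_lt_y; rewrite ltnNge ltnW.
Qed.

Lemma ninv_nat_sorted t : sorted ltn t -> ninv_nat t = 0.
Proof.
elim: t => [|x t IH] t_sorted; first by rewrite /ninv_nat big_ord0.
by rewrite ninv_nat_cons count_lt_head_sorted // IH // (path_sorted t_sorted).
Qed.

Lemma ninv_nat_insert a b x : sorted ltn (a ++ b) ->
  ninv_nat (a ++ x :: b) = count (fun y => x < y) a + count (fun y => y < x) b.
Proof.
elim: a => [|y a IH] /= ab_sorted.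
  by rewrite ninv_nat_cons ninv_nat_sorted // addn0.
have := count_lt_head_sorted ab_sorted; rewrite count_cat => /eqP.
rewrite addn_eq0 => /andP[/eqP a_ge_y /eqP b_ge_y].
rewrite ninv_nat_cons IH ?(path_sorted ab_sorted) // count_cat /= a_ge_y b_ge_y.
by rewrite add0n addn0 addnA.
Qed.

(* Moving [x] to the front of [a] changes the number of inversions by [size a] modulo 2. *)
Lemma odd_ninv_nat_insert a b x : sorted ltn (a ++ b) -> x \notin a ->
  odd (ninv_nat (a ++ x :: b)) = odd (size a + count (fun y => y < x) (a ++ b)).
Proof.
move=> ab_sorted x_notin_a; rewrite ninv_nat_insert // count_cat.
have <- : count (fun y => x < y) a + count (fun y => y < x) a = size a.
  elim: a x_notin_a {ab_sorted} => [|y a IH] //=; rewrite inE negb_or => /andP[x_neq_y /IH <-].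
  by rewrite addnACA -[RHS]add1n; congr (_ + _); case: ltngtP x_neq_y => // ->; rewrite eqxx.
by rewrite !oddD; do 3!case: odd.
Qed.

Lemma count_lt_sorted t k : sorted ltn t -> k \in t ->
  count (fun y => y < k) t = index k t.
Proof.
elim: t => [|y t IH] //= t_sorted; have /allP t_gt_y := order_path_min ltn_trans t_sorted.
have [<-|y_neq_k] := eqVneq y k; first by rewrite ltnn count_lt_head_sorted.
by rewrite inE eq_sym (negbTE y_neq_k) => k_in_t; rewrite t_gt_y // IH // (path_sorted t_sorted).
Qed.

End Inversions.

Section ExteriorBasis.
Variable m : nat.
Implicit Types (I J : {set 'I_m}) (i k : 'I_m).

Definition nbelow i I : nat := #|[set x in I | (x < i)%N]|.

Lemma nbelowE i I : nbelow i I = count (fun x : 'I_m => (x < i)%N) (enum I).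
Proof.
rewrite /nbelow cardE -size_filter /enum_mem -filter_predI; congr size; apply: eq_filter => x.
by rewrite !inE andbC.
Qed.

Lemma nbelowU1 k i I : k \notin I -> nbelow i (k |: I) = ((k < i)%N + nbelow i I)%N.
Proof.
move=> k_notin_I; rewrite /nbelow; case: (ltnP k i) => [k_lt_i | i_le_k].
  have -> : [set x in k |: I | (x < i)%N] = k |: [set x in I | (x < i)%N].
    by apply/setP => x; rewrite !inE; case: eqP => [->|].
  by rewrite cardsU1 inE (negbTE k_notin_I).
rewrite /= add0n; apply: eq_card => x; rewrite !inE; case: eqP => [->|] //=.
by rewrite ltnNge i_le_k andbF.
Qed.

Lemma nbelowD1 k i I : k \in I -> nbelow i I = ((k < i)%N + nbelow i (I :\ k))%N.
Proof. by move=> k_in_I; rewrite -nbelowU1 ?setD1K // !inE eqxx. Qed.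

Lemma nbelowU1_self i I : nbelow i (i |: I) = nbelow i I.
Proof.
by apply: eq_card => x; rewrite !inE; case: eqP => [->|] //=; rewrite ltnn andbF.
Qed.

Lemma nbelowD1_self i I : nbelow i (I :\ i) = nbelow i I.
Proof.
by apply: eq_card => x; rewrite !inE; case: eqP => [->|] //=; rewrite ltnn andbF.
Qed.

Lemma sorted_enum_val I : sorted ltn (map val (enum I)).
Proof.
apply: (@subseq_sorted _ _ ltn_trans _ (map val (enum 'I_m))); last first.
  by rewrite val_enum_ord iota_ltn_sorted.
by apply: map_subseq; rewrite {1}/enum_mem -enumT filter_subseq.
Qed.

Lemma index_enum_nbelow k I : k \in I -> index k (enum I) = nbelow k I.
Proof.
move=> k_in_I; rewrite nbelowE -(index_map val_inj) -(count_map val (fun y => y < k)%N).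
by rewrite count_lt_sorted ?sorted_enum_val // map_f // mem_enum.
Qed.

Lemma ninv_val (s : seq 'I_m) : ninv s = ninv_nat (map val s).
Proof. by rewrite /ninv /ninv_nat size_map. Qed.

Variable C : fieldType.

(* Moving [e_i] to the front costs [(-1)^(size a)]; sorting it into [J] then costs
   [(-1)^(nbelow i J)]. *)
Lemma wedge_insert J a b i : a ++ b = enum J ->
  wedge C (a ++ i :: b) =
  if i \in J then (0, set0) else ((-1) ^+ (size a + nbelow i J), i |: J).
Proof.
move=> abJ; have perm_i : perm_eq (a ++ i :: b) (i :: a ++ b) by rewrite (perm_catCA a [:: i] b).
rewrite /wedge (perm_uniq perm_i) /= abJ enum_uniq andbT mem_enum.
case: (boolP (i \in J)) => //= i_notin_J; congr (_, _); last first.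
  by apply/setP => x; rewrite !inE (perm_mem perm_i) inE abJ mem_enum.
have i_notin_a : val i \notin map val a.
  rewrite (mem_map val_inj); apply: contra i_notin_J => i_in_a.
  by rewrite -mem_enum -abJ mem_cat i_in_a.
rewrite ninv_val -signr_odd -[RHS]signr_odd map_cat /= odd_ninv_nat_insert //.
  by rewrite size_map -map_cat count_map abJ -nbelowE.
by rewrite -map_cat abJ sorted_enum_val.
Qed.

Lemma wedge_cons i I :
  wedge C (i :: enum I) =
  if i \in I then (0, set0) else ((-1) ^+ nbelow i I, i |: I).
Proof. exact: (@wedge_insert I [::]). Qed.

Lemma wedge_set_nth i k I : k \in I ->
  wedge C (set_nth i (enum I) (index k (enum I)) i) =
  if i \in I :\ k then (0, set0)
  else ((-1) ^+ (nbelow k I + nbelow i (I :\ k)), i |: (I :\ k)).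
Proof.
move=> k_in_I; rewrite -index_enum_nbelow //.
have := enum_uniq I; have := enum_setD1 I k; rewrite -mem_enum in k_in_I.
case/splitPr: k_in_I => a b enumD1 /=.
rewrite cat_uniq /= => /and3P[_ /norP[k_notin_a _] /andP[k_notin_b _]].
have -> : index k (a ++ k :: b) = size a by rewrite index_cat (negbTE k_notin_a) /= eqxx addn0.
have -> : set_nth i (a ++ k :: b) (size a) i = a ++ i :: b.
  by elim: (a) => //= y s ->.
apply: wedge_insert; rewrite enumD1 filter_cat /= eqxx /=.
congr (_ ++ _); apply/esym/all_filterP/allP => x x_in /=.
  by apply: contraNneq k_notin_a => <-.
by apply: contraNneq k_notin_b => <-.
Qed.

End ExteriorBasis.

Section SignRules.
Variables (C : fieldType) (m : nat).
Implicit Types (I : {set 'I_m}) (i k : 'I_m).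

Definition wedge_sign i I : C := (i \notin I)%:R * (-1) ^+ nbelow i I.
Definition contr_sign i I : C := (i \in I)%:R * (-1) ^+ nbelow i I.

Lemma wedge_signC i k I : i != k ->
  wedge_sign i I * wedge_sign k (i |: I) = - (wedge_sign k I * wedge_sign i (k |: I)).
Proof.
move=> i_neq_k; rewrite /wedge_sign !in_setU1 (negbTE i_neq_k) eq_sym (negbTE i_neq_k).
case: (boolP (i \in I)) => iI; case: (boolP (k \in I)) => kI; rewrite ?(mul0r, mulr0, oppr0) //.
rewrite !nbelowU1 // !exprD.
by case: ltngtP (i_neq_k : val i != val k) => //= _ _; rewrite ?expr0 ?expr1; ring.
Qed.

Lemma contr_signC i k I : i != k ->
  contr_sign i I * contr_sign k (I :\ i) = - (contr_sign k I * contr_sign i (I :\ k)).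
Proof.
move=> i_neq_k; rewrite /contr_sign !in_setD1 (negbTE i_neq_k) eq_sym (negbTE i_neq_k).
case: (boolP (i \in I)) => iI; case: (boolP (k \in I)) => kI; rewrite ?(mul0r, mulr0, oppr0) //.
rewrite [nbelow k I](nbelowD1 k iI) [nbelow i I](nbelowD1 i kI) !exprD.
by case: ltngtP (i_neq_k : val i != val k) => //= _ _; rewrite ?expr0 ?expr1; ring.
Qed.

Lemma contr_wedge_signC i k I : i != k ->
  contr_sign k I * wedge_sign i (I :\ k) = - (wedge_sign i I * contr_sign k (i |: I)).
Proof.
move=> i_neq_k; rewrite /wedge_sign /contr_sign in_setD1 in_setU1 i_neq_k eq_sym (negbTE i_neq_k).
case: (boolP (i \in I)) => iI; case: (boolP (k \in I)) => kI; rewrite ?(mul0r, mulr0, oppr0) //.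
rewrite [nbelow i I](nbelowD1 i kI) [nbelow k (i |: I)](nbelowU1 k iI) !exprD.
by case: ltngtP (i_neq_k : val i != val k) => //= _ _; rewrite ?expr0 ?expr1; ring.
Qed.

End SignRules.

Section Support.
Variable C : fieldType.

Lemma inX_subr1 (lj x : C) : inX lj x -> x != 0 -> inX lj (x - 1).
Proof.
case=> [[lj_notZ [k xE]] | [ljN [k ->]] | [ljNeg [k ->]]] x_neq0.
- by apply: Or31; split => //; exists (k - 1); rewrite rmorphB /= rmorph1 -xE addrAC.
- apply: Or32; split => //; case: k x_neq0 => [|k] x_neq0; first by rewrite eqxx in x_neq0.
  by exists k; rewrite mulrSr addrK.
- by apply: Or33; split => //; exists k.+1; rewrite -opprD -mulrSr.
Qed.

Lemma inX_addr1 (lj x : C) : inX lj x -> x != -1 -> inX lj (x + 1).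
Proof.
case=> [[lj_notZ [k xE]] | [ljN [k ->]] | [ljNeg [k ->]]] x_neqN1.
- by apply: Or31; split => //; exists (k + 1); rewrite rmorphD /= rmorph1 -xE addrAC.
- by apply: Or32; split => //; exists k.+1; rewrite mulrSr.
- apply: Or33; split => //; case: k x_neqN1 => [|k] x_neqN1; first by rewrite eqxx in x_neqN1.
  by exists k; rewrite (mulrSr _ k.+1) opprD subrK.
Qed.

Variables (n : nat) (lam : 'I_n -> C).
Implicit Types (l : {ffun 'I_n -> C}) (j : 'I_n).

Definition inSb l : bool := `[< inS lam (fun j => l j) >].

Lemma inSb_subE l j : inSb l -> l j != 0 -> inSb (subE l j).
Proof.
move=> /asboolP Sl lj_neq0; apply/asboolP => k; rewrite ffunE.
by case: (eqVneq k j) => [-> | _]; [exact: inX_subr1 | rewrite subr0].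
Qed.

Lemma inSb_addE l j : inSb l -> l j != -1 -> inSb (addE l j).
Proof.
move=> /asboolP Sl lj_neqN1; apply/asboolP => k; rewrite ffunE.
by case: (eqVneq k j) => [-> | _]; [exact: inX_addr1 | rewrite addr0].
Qed.

Lemma inSb_coordinatewise l l' l'' : inSb l -> inSb l' ->
  (forall k, l'' k = l k \/ l'' k = l' k) -> inSb l''.
Proof. by move=> /asboolP Sl /asboolP Sl' l''E; apply/asboolP => k; case: (l''E k) => ->. Qed.

Lemma subEE l j k : subE l j k = l k - (k == j)%:R.
Proof. by rewrite ffunE. Qed.

Lemma addEE l j k : addE l j k = l k + (k == j)%:R.
Proof. by rewrite ffunE. Qed.

Lemma subEC l j k : subE (subE l j) k = subE (subE l k) j.
Proof. by apply/ffunP => x; rewrite !ffunE addrAC. Qed.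

Lemma addEC l j k : addE (addE l j) k = addE (addE l k) j.
Proof. by apply/ffunP => x; rewrite !ffunE addrAC. Qed.

Lemma subE_addE l j k : subE (addE l k) j = addE (subE l j) k.
Proof. by apply/ffunP => x; rewrite !ffunE addrAC. Qed.

Lemma addEK l j : subE (addE l j) j = l.
Proof. by apply/ffunP => x; rewrite !ffunE addrK. Qed.

Lemma subEK l j : addE (subE l j) j = l.
Proof. by apply/ffunP => x; rewrite !ffunE subrK. Qed.

Lemma moveE_subE l j k : moveE l j k = addE (subE l j) k.
Proof. by apply/ffunP => x; rewrite !ffunE. Qed.

End Support.

Section Oscillator.
Variables (C : fieldType) (m n : nat) (lam : 'I_n -> C).
Local Notation B := (basis C m n).
Local Notation V := (B -> C).
Local Notation inSb := (inSb lam).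

Definition indS (x : B) : C := (inSb x.2)%:R.

Inductive cliff_op := Wedge of 'I_m | Contr of 'I_m | Parity.
Inductive weyl_op := Lower of 'I_n | Raise of 'I_n | Restrict.
Inductive osc_op := Cl of cliff_op | Wy of weyl_op.
Coercion Cl : cliff_op >-> osc_op.
Coercion Wy : weyl_op >-> osc_op.

(* The oscillator operator [o] sends the basis vector [x] to [weight o x *: target o x]:
   [Wedge i] is [e_i /\ _], [Contr i] removes [e_i], [Parity] is [(-1)^r], [Lower j] is
   [y(l) |-> l_j y(l - e_j)], [Raise j] is [y(l) |-> y(l + e_j)], and the factor [indS x]
   kills the basis vectors outside [M(lambda)]. *)
Definition weight (o : osc_op) (x : B) : C :=
  indS x * match o with
  | Cl (Wedge i) => wedge_sign C i x.1
  | Cl (Contr i) => contr_sign C i x.1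
  | Cl Parity => (-1) ^+ #|x.1|
  | Wy (Lower j) => x.2 j
  | Wy (Raise j) => (inSb (addE x.2 j))%:R
  | Wy Restrict => 1
  end.

Definition target (o : osc_op) (x : B) : B :=
  match o with
  | Cl (Wedge i) => (i |: x.1, x.2)
  | Cl (Contr i) => (x.1 :\ i, x.2)
  | Wy (Lower j) => (x.1, subE x.2 j)
  | Wy (Raise j) => (x.1, addE x.2 j)
  | Cl Parity | Wy Restrict => x
  end.

(* The transpose of [o], acting on coefficient functionals; composites therefore appear
   in reversed order. *)
Definition dual (o : osc_op) (f : V) : V := fun x => weight o x * f (target o x).

Lemma dualD o f g : dual o (f + g) = dual o f + dual o g.
Proof. by apply/funext => x; rewrite !fctE /dual /= mulrDr. Qed.

Lemma dualN o f : dual o (- f) = - dual o f.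
Proof. by apply/funext => x; rewrite !fctE /dual /= mulrN. Qed.

Lemma dualB o f g : dual o (f - g) = dual o f - dual o g.
Proof. by rewrite dualD dualN. Qed.

Lemma dualZ o a f : dual o (a \*o f) = a \*o dual o f.
Proof. by apply/funext => x; rewrite /dual /= mulrCA. Qed.

Lemma weight_indS_target o x : weight o x * indS (target o x) = weight o x.
Proof.
rewrite /weight /indS; case: x => I l; case: (boolP (inSb l)) => Sl; rewrite ?mul0r //.
case: o => [[i|i|]|[j|j|]] /=; rewrite ?Sl ?mulr1 //.
  by have [-> | lj_neq0] := eqVneq (l j) 0; rewrite ?(mulr0, mul0r) // inSb_subE ?mulr1.
by case: inSb; rewrite ?mulr0 ?mulr1.
Qed.

Lemma dual_restrict o f : dual o (dual Restrict f) = dual o f.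
Proof.
by apply/funext => x; rewrite /dual {2}/weight mulr1 mulrA weight_indS_target.
Qed.

Lemma dual_cl_wy (c : cliff_op) (w : weyl_op) f : dual c (dual w f) = dual w (dual c f).
Proof.
apply/funext => -[I l].
have lower_indS j : (inSb l)%:R * (inSb l)%:R * l j = (inSb l)%:R * l j * (inSb (subE l j))%:R.
  case Sl: (inSb l); rewrite ?(mul0r, mul1r) //.
  by have [-> | lj_neq0] := eqVneq (l j) 0; rewrite ?(mulr0, mul0r) // inSb_subE ?mulr1.
case: c => [i|i|]; case: w => [j|j|]; rewrite /dual /weight /indS /=;
  first [ring: (lower_indS j) | case: (inSb l); case: (inSb (addE l j)) => /=; ring | ring].
Qed.

Lemma dual_wedgeC i k f : dual (Wedge i) (dual (Wedge k) f) = - dual (Wedge k) (dual (Wedge i) f).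
Proof.
apply/funext => -[I l]; rewrite !fctE /dual /weight /indS /= setUCA.
have [<- | i_neq_k] := eqVneq i k; first by rewrite /wedge_sign setU11 !(mul0r, mulr0, oppr0).
by ring: (wedge_signC C I i_neq_k).
Qed.

Lemma dual_contrC i k f : dual (Contr i) (dual (Contr k) f) = - dual (Contr k) (dual (Contr i) f).
Proof.
apply/funext => -[I l]; rewrite !fctE /dual /weight /indS /= [I :\ k :\ i]setDDl setUC -setDDl.
have [<- | i_neq_k] := eqVneq i k; first by rewrite /contr_sign setD11 !(mul0r, mulr0, oppr0).
by ring: (contr_signC C I i_neq_k).
Qed.

Lemma dual_contr_wedge i k f :
  dual (Contr k) (dual (Wedge i) f) =
  (i == k)%:R \*o dual Restrict f - dual (Wedge i) (dual (Contr k) f).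
Proof.
apply/funext => -[I l]; rewrite !fctE /dual /weight /indS /=.
have [<- | i_neq_k] := eqVneq i k; last first.
  have -> : (i |: I) :\ k = i |: (I :\ k).
    by apply/setP => x; rewrite !inE; case: (eqVneq x i) => [->|] //=; rewrite i_neq_k.
  by rewrite /=; ring: (contr_wedge_signC C I i_neq_k).
have sign_sq := sqrr_sign C (nbelow i I).
rewrite /wedge_sign /contr_sign !inE eqxx /=; case: (boolP (i \in I)) => iI /=.
  by rewrite setD1K // nbelowD1_self; case: inSb => /=; ring: sign_sq.
by rewrite setU1K // nbelowU1_self; case: inSb => /=; ring: sign_sq.
Qed.

Lemma dual_parity_wedge i f : dual Parity (dual (Wedge i) f) = - dual (Wedge i) (dual Parity f).
Proof.
apply/funext => -[I l]; rewrite !fctE /dual /weight /indS /wedge_sign /=.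
case: (boolP (i \in I)) => iI /=; first by rewrite !(mul0r, mulr0, oppr0).
by rewrite cardsU1 iI exprD expr1; ring.
Qed.

Lemma dual_parity_contr i f : dual Parity (dual (Contr i) f) = - dual (Contr i) (dual Parity f).
Proof.
apply/funext => -[I l]; rewrite !fctE /dual /weight /indS /contr_sign /=.
case: (boolP (i \in I)) => iI /=; last by rewrite !(mul0r, mulr0, oppr0).
by rewrite [#|I|](cardsD1 i) iI exprD expr1; ring.
Qed.

Lemma dual_parityK f : dual Parity (dual Parity f) = dual Restrict f.
Proof.
apply/funext => -[I l]; rewrite /dual /weight /indS /=.
by case: inSb => /=; ring: (sqrr_sign C #|I|).
Qed.

Lemma dual_lowerC j k f : dual (Lower j) (dual (Lower k) f) = dual (Lower k) (dual (Lower j) f).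
Proof.
apply/funext => -[I l]; rewrite /dual /weight /indS /= subEC !subEE.
case Sl: (inSb l); rewrite ?(mul0r, mulr0) //.
have [<- // | j_neq_k] := eqVneq j k.
rewrite /= !subr0.
have [-> | lj_neq0] := eqVneq (l j) 0; first by rewrite !(mul0r, mulr0).
have [-> | lk_neq0] := eqVneq (l k) 0; first by rewrite !(mul0r, mulr0).
by rewrite !inSb_subE //; ring.
Qed.

Lemma dual_raiseC j k f : dual (Raise j) (dual (Raise k) f) = dual (Raise k) (dual (Raise j) f).
Proof.
apply/funext => -[I l]; rewrite /dual /weight /indS /= addEC.
case Sl: (inSb l); rewrite ?(mul0r, mulr0) //.
have [<- // | j_neq_k] := eqVneq j k.
case Sjk: (inSb (addE (addE l k) j)); rewrite ?(mul0r, mulr0) //.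
have Sj : inSb (addE l j).
  apply: inSb_coordinatewise Sl Sjk _ => x; rewrite !ffunE.
  have [-> | _] := eqVneq x k; [left | right]; last by rewrite addr0.
  by rewrite eq_sym (negbTE j_neq_k) addr0.
have Sk : inSb (addE l k).
  apply: inSb_coordinatewise Sl Sjk _ => x; rewrite !ffunE.
  have [-> | _] := eqVneq x j; [left | right]; last by rewrite addr0.
  by rewrite (negbTE j_neq_k) addr0.
by rewrite Sj Sk.
Qed.

Lemma dual_raise_lower j k f :
  dual (Raise k) (dual (Lower j) f) =
  dual (Lower j) (dual (Raise k) f) + (j == k)%:R \*o dual Restrict f.
Proof.
apply/funext => -[I l]; rewrite !fctE /dual /weight /indS /=.
case Sl: (inSb l); rewrite ?(mul0r, mulr0, addr0) //.
have [<- | j_neq_k] := eqVneq j k.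
  rewrite addEK subEK Sl !ffunE eqxx /=.
  have [lj0 | lj_neq0] := eqVneq (l j) 0.
    by rewrite inSb_addE ?lj0 ?(eq_sym 0) ?oppr_eq0 ?oner_eq0 //=; ring.
  rewrite inSb_subE //=; have [-> | lj_neqN1] := eqVneq (l j) (-1); first by ring.
  by rewrite inSb_addE //=; ring.
rewrite subE_addE !ffunE (negbTE j_neq_k) /= addr0.
have [-> | lj_neq0] := eqVneq (l j) 0; first by ring.
have -> : inSb (addE (subE l j) k) = inSb (addE l k).
  apply/idP/idP => [S_moved | S_raised]; last first.
    by rewrite -subE_addE inSb_subE // ffunE (negbTE j_neq_k) addr0.
  apply: inSb_coordinatewise Sl S_moved _ => x; rewrite !addEE subEE.
  by have [-> | _] := eqVneq x j; [left; rewrite (negbTE j_neq_k) | right];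
    rewrite /= ?addr0 ?subr0.
by rewrite inSb_subE //=; case: inSb => /=; ring.
Qed.

Local Notation W i := (dual (Wedge i)).
Local Notation Ct i := (dual (Contr i)).
Local Notation P := (dual Parity).
Local Notation Rs := (dual Restrict).
Local Notation Lw j := (dual (Lower j)).
Local Notation Rz j := (dual (Raise j)).

Lemma dual_wedge_contr i k f : W i (Ct k f) = (i == k)%:R \*o Rs f - Ct k (W i f).
Proof. by rewrite dual_contr_wedge opprB addrC subrK. Qed.

Lemma dual_wedge_parity i f : W i (P f) = - P (W i f).
Proof. by rewrite dual_parity_wedge opprK. Qed.

Lemma dual_contr_parity i f : Ct i (P f) = - P (Ct i f).
Proof. by rewrite dual_parity_contr opprK. Qed.

Lemma dual_lower_raise j k f : Lw j (Rz k f) = Rz k (Lw j f) - (j == k)%:R \*o Rs f.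
Proof. by rewrite dual_raise_lower addrK. Qed.

(* The transpose of the oscillator realisation of [E_(u, v)], e.g. [E_(i, k) = e_i /\ i_k]
   gives [Ct k (W i f)]. *)
Definition dualE (u v : 'I_m + 'I_n) (f : V) : V :=
  match u, v with
  | inl i, inl k => Ct k (W i f)
  | inr l, inr j => Lw j (Rz l f)
  | inl i, inr j => Lw j (P (W i f))
  | inr j, inl i => Ct i (P (Rz j f))
  end.

Definition is_inr (u : 'I_m + 'I_n) : bool := if u is inr _ then true else false.

Definition bracket_sign (u v u' v' : 'I_m + 'I_n) : C :=
  (-1) ^+ ((is_inr u (+) is_inr v) && (is_inr u' (+) is_inr v')).

(* The transpose of [[E_(u, v), E_(u', v')] = d_(v, u') E_(u, v') - (+-) d_(v', u) E_(u', v)]. *)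
Definition bracket_rel (u v u' v' : 'I_m + 'I_n) : Prop := forall f,
  dualE u' v' (dualE u v f) - bracket_sign u v u' v' \*o dualE u v (dualE u' v' f) =
  (v == u')%:R \*o dualE u v' f - (bracket_sign u v u' v' * (v' == u)%:R) \*o dualE u' v f.

Lemma bracket_rel_sym u v u' v' : bracket_rel u v u' v' -> bracket_rel u' v' u v.
Proof.
move=> uv_u'v' f; apply/funext => x; have := congr1 (@^~ x) (uv_u'v' f).
rewrite /bracket_sign [(is_inr u' (+) _) && _]andbC !fctE /=.
case: (_ && _); rewrite ?expr0 ?expr1 ?mul1r ?mulN1r ?mulNr ?opprK => e.
  by rewrite addrC e addrC.
by apply: oppr_inj; rewrite !opprB e.
Qed.

Let sum_eqE := (fun x y => erefl : (inl x == inl y :> 'I_m + 'I_n) = (x == y),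
                fun x y => erefl : (inr x == inr y :> 'I_m + 'I_n) = (x == y),
                fun x y => erefl : (inl x == inr y :> 'I_m + 'I_n) = false,
                fun x y => erefl : (inr x == inl y :> 'I_m + 'I_n) = false).

Local Ltac bracket_unfold := rewrite /dualE /bracket_sign /= ?sum_eqE ?expr0 ?expr1.
Local Ltac pointwise_ring := apply/funext => x; rewrite !fctE /=; ring.

(* [glm], [gln]: the even blocks; [up], [down]: the odd blocks [E_(i, m+j)], [E_(m+j, i)]. *)
Lemma bracket_glm_glm i k i' k' : bracket_rel (inl i) (inl k) (inl i') (inl k').
Proof.
move=> f; bracket_unfold.
have -> : Ct k' (W i' (Ct k (W i f))) =
          (i' == k)%:R \*o Ct k' (W i f) - Ct k' (Ct k (W i' (W i f))).
  by rewrite dual_wedge_contr dualB dualZ dual_restrict.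
have -> : Ct k' (Ct k (W i' (W i f))) = Ct k (Ct k' (W i (W i' f))).
  by rewrite (dual_contrC k' k) (dual_wedgeC i' i) !dualN opprK.
have -> : Ct k (Ct k' (W i (W i' f))) =
          (i == k')%:R \*o Ct k (W i' f) - Ct k (W i (Ct k' (W i' f))).
  by rewrite (dual_contr_wedge i k') dualB dualZ dual_restrict.
by rewrite [k == i']eq_sym [k' == i]eq_sym; pointwise_ring.
Qed.

Lemma bracket_gln_gln a b c d : bracket_rel (inr a) (inr b) (inr c) (inr d).
Proof.
move=> f; bracket_unfold.
have -> : Lw d (Rz c (Lw b (Rz a f))) = Lw d (Lw b (Rz c (Rz a f))) + (b == c)%:R \*o Lw d (Rz a f).
  by rewrite (dual_raise_lower b c) dualD dualZ dual_restrict.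
have -> : Lw d (Lw b (Rz c (Rz a f))) = Lw b (Lw d (Rz a (Rz c f))).
  by rewrite (dual_lowerC d b) (dual_raiseC c a).
have -> : Lw b (Lw d (Rz a (Rz c f))) = Lw b (Rz a (Lw d (Rz c f))) - (d == a)%:R \*o Lw b (Rz c f).
  by rewrite (dual_lower_raise d a) dualB dualZ dual_restrict.
by pointwise_ring.
Qed.

Lemma bracket_glm_gln i k a b : bracket_rel (inl i) (inl k) (inr a) (inr b).
Proof. by move=> f; bracket_unfold; rewrite !dual_cl_wy; pointwise_ring. Qed.

Lemma bracket_glm_up i k i' j : bracket_rel (inl i) (inl k) (inl i') (inr j).
Proof.
move=> f; bracket_unfold.
have -> : Lw j (P (W i' (Ct k (W i f)))) =
          (i' == k)%:R \*o Lw j (P (W i f)) - Lw j (P (Ct k (W i' (W i f)))).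
  by rewrite (dual_wedge_contr i' k) !dualB !dualZ !dual_restrict.
have -> : Ct k (W i (Lw j (P (W i' f)))) = - Lw j (P (Ct k (W i' (W i f)))).
  rewrite !dual_cl_wy dual_wedge_parity !dualN dual_contr_parity !dualN opprK.
  by rewrite (dual_wedgeC i i') !dualN.
by rewrite [k == i']eq_sym; pointwise_ring.
Qed.

Lemma bracket_glm_down i k j i' : bracket_rel (inl i) (inl k) (inr j) (inl i').
Proof.
move=> f; bracket_unfold.
have -> : Ct k (W i (Ct i' (P (Rz j f)))) =
          Ct i' (Ct k (W i (P (Rz j f)))) + (i == i')%:R \*o Ct k (P (Rz j f)).
  by rewrite dual_wedge_contr dualB dualZ dual_restrict (dual_contrC k i') opprK addrC.
have -> : Ct i' (P (Rz j (Ct k (W i f)))) = Ct i' (Ct k (W i (P (Rz j f)))).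
  by rewrite !dual_cl_wy dual_parity_contr !dualN dual_parity_wedge !dualN opprK.
by rewrite [i' == i]eq_sym; pointwise_ring.
Qed.

Lemma bracket_up_up i j i' j' : bracket_rel (inl i) (inr j) (inl i') (inr j').
Proof.
move=> f; bracket_unfold.
have -> : Lw j' (P (W i' (Lw j (P (W i f))))) = - Lw j' (Lw j (W i' (W i f))).
  by rewrite !dual_cl_wy dual_wedge_parity dualN dual_parityK !dualN dual_restrict.
have -> : Lw j (P (W i (Lw j' (P (W i' f))))) = - Lw j (Lw j' (W i (W i' f))).
  by rewrite !dual_cl_wy dual_wedge_parity dualN dual_parityK !dualN dual_restrict.
by rewrite (dual_lowerC j' j) (dual_wedgeC i' i) !dualN; pointwise_ring.
Qed.

Lemma bracket_down_down j i j' i' : bracket_rel (inr j) (inl i) (inr j') (inl i').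
Proof.
move=> f; bracket_unfold.
have -> : Ct i' (P (Rz j' (Ct i (P (Rz j f))))) = - Rz j' (Rz j (Ct i' (Ct i f))).
  by rewrite !dual_cl_wy dual_parity_contr dualN dual_parityK !dualN dual_restrict.
have -> : Ct i (P (Rz j (Ct i' (P (Rz j' f))))) = - Rz j (Rz j' (Ct i (Ct i' f))).
  by rewrite !dual_cl_wy dual_parity_contr dualN dual_parityK !dualN dual_restrict.
by rewrite (dual_raiseC j' j) (dual_contrC i' i) !dualN; pointwise_ring.
Qed.

Lemma bracket_up_down i j j' i' : bracket_rel (inl i) (inr j) (inr j') (inl i').
Proof.
move=> f; bracket_unfold.
have -> : Ct i' (P (Rz j' (Lw j (P (W i f))))) =
          Lw j (Rz j' (Ct i' (W i f))) + (j == j')%:R \*o Ct i' (W i f).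
  rewrite (dual_raise_lower j j') !dualD !dualZ !dual_restrict dual_parityK dual_restrict.
  by rewrite !dual_cl_wy dual_parityK dual_restrict.
have -> : Lw j (P (W i (Ct i' (P (Rz j' f))))) = Lw j (Rz j' (W i (Ct i' f))).
  rewrite !dual_cl_wy dual_parity_wedge dualN dual_parity_contr !dualN opprK.
  by rewrite dual_parityK dual_restrict.
have -> : Lw j (Rz j' (Ct i' (W i f))) =
          (i == i')%:R \*o Lw j (Rz j' f) - Lw j (Rz j' (W i (Ct i' f))).
  by rewrite (dual_contr_wedge i i') !dualB !dualZ !dual_restrict.
by rewrite [i' == i]eq_sym; pointwise_ring.
Qed.

Lemma bracket_up_gln i j a b : bracket_rel (inl i) (inr j) (inr a) (inr b).
Proof.
move=> f; bracket_unfold.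
have -> : Lw b (Rz a (Lw j (P (W i f)))) =
          Lw j (Lw b (Rz a (P (W i f)))) + (j == a)%:R \*o Lw b (P (W i f)).
  by rewrite (dual_raise_lower j a) dualD dualZ dual_restrict (dual_lowerC b j).
by rewrite !dual_cl_wy; pointwise_ring.
Qed.

Lemma bracket_down_gln j i a b : bracket_rel (inr j) (inl i) (inr a) (inr b).
Proof.
move=> f; bracket_unfold.
have -> : Ct i (P (Rz j (Lw b (Rz a f)))) =
          Lw b (Rz j (Rz a (Ct i (P f)))) + (b == j)%:R \*o Rz a (Ct i (P f)).
  by rewrite (dual_raise_lower b j) !dualD !dualZ !dual_restrict !dual_cl_wy.
by rewrite !dual_cl_wy (dual_raiseC a j); pointwise_ring.
Qed.

Lemma bracket_relP u v u' v' : bracket_rel u v u' v'.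
Proof.
case: u => [i|j]; case: v => [k|l]; case: u' => [i'|j']; case: v' => [k'|l'];
  first [ exact: bracket_glm_glm | exact: bracket_gln_gln | exact: bracket_glm_gln
        | exact: bracket_glm_up | exact: bracket_glm_down | exact: bracket_up_up
        | exact: bracket_down_down | exact: bracket_up_down | exact: bracket_up_gln
        | exact: bracket_down_gln | apply: bracket_rel_sym ].
all: first [ exact: bracket_glm_gln | exact: bracket_glm_up | exact: bracket_glm_down
           | exact: bracket_up_down | exact: bracket_up_gln | exact: bracket_down_gln ].
Qed.

End Oscillator.

Section MatrixUnits.
Variables (C : fieldType) (m n : nat) (lam : 'I_n -> C).
Local Notation B := (basis C m n).
Local Notation V := (B -> C).
Local Notation inSb := (inSb lam).
Local Notation dualE := (dualE lam).

Definition dual_act (a b : 'I_(m + n)) (f : V) (x : B) : C :=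
  \sum_(u <- act a b x | inSb u.2.2) u.1 * f u.2.

Lemma dual_act_dualE a b f x :
  inSb x.2 -> dual_act a b f x = dualE (fintype.split a) (fintype.split b) f x.
Proof.
case: x => I l /= Sl; rewrite /dual_act /act.
case: (fintype.split a) => [i|j]; case: (fintype.split b) => [k|k];
  rewrite /dualE /dual /weight /indS /= Sl.
- rewrite cardE filter_nth_iota ?enum_uniq // mem_enum /contr_sign.
  case: (boolP (k \in I)) => kI /=; last by rewrite big_nil; ring.
  rewrite big_cons big_nil /mkterm /= wedge_set_nth // Sl /wedge_sign.
  by case: (i \in I :\ k) => /=; rewrite ?exprD; ring.
- rewrite big_cons big_nil /mkterm /= wedge_cons /wedge_sign.
  by case: (i \in I) => /=; case: (inSb (subE l k)) => /=; ring.
- rewrite /contr_sign; case: (boolP (k \in I)) => kI /=; last by rewrite big_nil; ring.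
  rewrite big_cons big_nil /= index_enum_nbelow //.
  have below_le : (nbelow k I <= #|I :\ k|)%N.
    by rewrite -nbelowD1_self; apply/subset_leq_card/subsetP => x; rewrite inE => /andP[].
  rewrite [#|I|](cardsD1 k) kI add1n subSS -signr_odd oddB // signr_addb !signr_odd.
  by case: (inSb (addE l j)) => /=; ring.
- rewrite big_cons big_nil /= moveE_subE.
  have [-> | lj_neq0] := eqVneq (l k) 0; first by case: inSb => /=; ring.
  by rewrite inSb_subE //=; case: inSb => /=; ring.
Qed.

Definition coord (y : B) : V := fun w => (w == y)%:R.

Lemma coef_act a b z y : inSb y.2 -> coef (act a b z) y = dual_act a b (coord y) z.
Proof.
move=> Sy; rewrite /coef /dual_act /coord big_mkcond [RHS]big_mkcond; apply: eq_bigr => u _.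
by case: eqP => [-> | _]; [rewrite Sy mulr1 | case: ifP; rewrite ?mulr0].
Qed.

Lemma coef_actL a b (v : comb C m n) y :
  coef (actL lam a b v) y = \sum_(t <- v | inSb t.2.2) t.1 * coef (act a b t.2) y.
Proof.
rewrite /coef /actL big_flatten /= big_map big_filter; apply: eq_bigr => t _.
by rewrite big_map mulr_sumr.
Qed.

Lemma actL1 a b (x : B) :
  inSb x.2 -> actL lam a b [:: (1, x)] = [seq (1 * u.1, u.2) | u <- act a b x].
Proof. by move=> Sx; rewrite /actL /= ifT //= cats0. Qed.

Lemma coef_actL1 a b x y : inSb x.2 -> inSb y.2 ->
  coef (actL lam a b [:: (1, x)]) y = dualE (fintype.split a) (fintype.split b) (coord y) x.
Proof.
by move=> Sx Sy; rewrite coef_actL big_cons big_nil Sx mul1r addr0 coef_act // dual_act_dualE.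
Qed.

Lemma coef_actL2 a b c d x y : inSb x.2 -> inSb y.2 ->
  coef (actL lam a b (actL lam c d [:: (1, x)])) y =
  dualE (fintype.split c) (fintype.split d) (dualE (fintype.split a) (fintype.split b) (coord y)) x.
Proof.
move=> Sx Sy; rewrite coef_actL actL1 // big_map -dual_act_dualE //.
rewrite /dual_act; apply: eq_bigr => u Su /=.
by rewrite mul1r coef_act // dual_act_dualE.
Qed.

Lemma ipar_split (a : 'I_(m + n)) : ipar a = is_inr (fintype.split a).
Proof. by rewrite /ipar; case: splitP => [i | j] ->; rewrite ?leq_addr // leqNgt ltn_ord. Qed.

Lemma actL_bracket a b c d (x y : B) : inSb x.2 -> inSb y.2 ->
  coef (actL lam a b (actL lam c d [:: (1, x)])) y
    - (-1) ^+ (Epar a b && Epar c d) * coef (actL lam c d (actL lam a b [:: (1, x)])) y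
  = (b == c)%:R * coef (actL lam a d [:: (1, x)]) y
    - (-1) ^+ (Epar a b && Epar c d) * (d == a)%:R * coef (actL lam c b [:: (1, x)]) y.
Proof.
move=> Sx Sy; rewrite !coef_actL2 // !coef_actL1 //.
have := congr1 (@^~ x) (bracket_relP lam (fintype.split a) (fintype.split b)
  (fintype.split c) (fintype.split d) (coord y)).
by rewrite !fctE /= /bracket_sign -!ipar_split !(inj_eq (can_inj splitK)).
Qed.

End MatrixUnits.

Section Grading.
Variables (C : fieldType) (m n : nat) (lam : 'I_n -> C).
Implicit Types (l : {ffun 'I_n -> C}) (j k : 'I_n).

Definition defect l : C := \sum_(j < n) (lam j - l j).

Lemma defect_subE l j : defect (subE l j) = defect l + 1.
Proof.
rewrite /defect -(sumr_delta _ j) -big_split; apply: eq_bigr => i _.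
by rewrite ffunE opprB addrCA addrC.
Qed.

Lemma defect_addE l j : defect (addE l j) = defect l - 1.
Proof.
by rewrite /defect -(sumr_delta _ j) -sumrB; apply: eq_bigr => i _; rewrite ffunE opprD addrA.
Qed.

Lemma defect_moveE l j k : defect (moveE l j k) = defect l.
Proof. by rewrite moveE_subE defect_addE defect_subE addrK. Qed.

Lemma defect_act a b (x : basis C m n) t : t \in act a b x ->
  defect t.2.2 = defect x.2 + (if Epar a b then (if ipar a then -1 else 1) else 0).
Proof.
rewrite /Epar !ipar_split /act.
case: (fintype.split a) => [i|j]; case: (fintype.split b) => [k|k] /=.
- by case/mapP => p _ -> /=; rewrite addr0.
- by rewrite inE => /eqP -> /=; rewrite defect_subE.
- by case: ifP => _ //; rewrite inE => /eqP -> /=; rewrite defect_addE.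
- by rewrite inE => /eqP -> /=; rewrite defect_moveE addr0.
Qed.

Lemma bpar_act a b (x : basis C m n) t p :
  t \in act a b x -> bpar lam x p -> bpar lam t.2 (p (+) Epar a b).
Proof.
move=> /defect_act defect_t [k [defect_x odd_k]].
have {}defect_x : defect x.2 = k%:~R := defect_x.
rewrite /bpar -/(defect t.2.2) defect_t defect_x.
case: (Epar a b); last by exists k; rewrite addr0 addbF.
case: (ipar a); [exists (k - 1) | exists (k + 1)];
  by split; rewrite ?rmorphB ?rmorphD /= ?rmorph1 ?odd_absz_subr1 ?odd_absz_addr1 ?odd_k ?addbT.
Qed.

End Grading.

Theorem lemma4p1 (R : realType) (m n : nat) (lam : 'I_n -> R[i]) :
  (* the linear extension of the action is a representation of gl(m,n):
     E_ab E_cd - (-1)^{|E_ab||E_cd|} E_cd E_ab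
       = [E_ab, E_cd] = delta_bc E_ad - (-1)^{|E_ab||E_cd|} delta_da E_cb,
     checked on every basis vector x of M(lambda), coefficientwise *)
  (forall (a b c d : 'I_(m + n)) (x y : basis (R[i]) m n),
      inS lam (fun j => x.2 j) -> inS lam (fun j => y.2 j) ->
      coef (actL lam a b (actL lam c d [:: (1, x)])) y
        - (-1) ^+ (Epar a b && Epar c d)
          * coef (actL lam c d (actL lam a b [:: (1, x)])) y
      = (b == c)%:R * coef (actL lam a d [:: (1, x)]) y
        - (-1) ^+ (Epar a b && Epar c d) * (d == a)%:R
          * coef (actL lam c b [:: (1, x)]) y)
  /\
  (* the action is compatible with the Z_2-grading of M(lambda) *)
  (forall (a b : 'I_(m + n)) (x : basis (R[i]) m n) (t : R[i] * basis (R[i]) m n)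
          (p : bool),
      inS lam (fun j => x.2 j) -> t \in act a b x -> t.1 != 0 ->
      inS lam (fun j => t.2.2 j) ->
      bpar lam x p -> bpar lam t.2 (p (+) Epar a b)).
Proof.
split=> [a b c d x y Sx Sy | a b x t p _ t_in_act _ _].
  exact: actL_bracket (asboolT Sx) (asboolT Sy).
exact: bpar_act.
Qed.
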